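(* Let $Z$ be the incidence matrix of the finite poset $\Phi_6((12)(3456))$ (with the pointwise order). Then $\phi_9\big((12)(345)(6789)\big)$ equals the sum of all entries of $Z^3$ (equivalently, the number of chains $a_1\le a_2\le a_3\le a_4$ in $\Phi_6((12)(3456))$), and its value is $22062570$.
   Context: $B=\{0,1\}$ with $0\le1$; $B^n$ is ordered componentwise; $D_n$ is the set of monotone functions $B^n\to B$, ordered pointwise. $S_n$ acts on $D_n$ by $(\pi f)(x_1,\dots,x_n)=f(x_{\pi(1)},\dots,x_{\pi(n)})$. For $\pi\in S_n$, $\Phi_n(\pi)=\{f\in D_n:\pi f=f\}$ and $\phi_n(\pi)=|\Phi_n(\pi)|$. Note $\phi_n(\pi)$ depends only on the cycle type of $\pi$. The incidence matrix of a finite poset $(X,\le)$ with elements $x_1,\dots,x_m$ is the $m\times m$ matrix $M$ with $M_{i,j}=1$ if $x_i\le x_j$ and $0$ otherwise. *)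

From mathcomp Require Import all_boot all_order all_algebra all_fingroup.
Set Implicit Arguments. Unset Strict Implicit. Unset Printing Implicit Defensive.
Import GRing.Theory.
Local Open Scope ring_scope.

(* B^n as {ffun 'I_n -> bool}, componentwise order; on B = bool, 0 <= 1 is a ==> b. *)
Definition vec (n : nat) := {ffun 'I_n -> bool}.
Definition vle n (x y : vec n) : bool := [forall i, x i ==> y i].

Definition bfun (n : nat) := {ffun vec n -> bool}.
Definition fle n (f g : bfun n) : bool := [forall x, f x ==> g x].

Definition monotone n (f : bfun n) : bool :=
  [forall x, forall y, vle x y ==> (f x ==> f y)].

Definition D (n : nat) : {set bfun n} := [set f | monotone f].

Definition act n (p : 'S_n) (f : bfun n) : bfun n :=
  [ffun x : vec n => f [ffun i => x (p i)]].

Definition Phi n (p : 'S_n) : {set bfun n} := [set f in D n | act p f == f].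
Definition phi n (p : 'S_n) : nat := #|Phi p|.

Definition incidence_mx (T : finType) (le : rel T) (A : {set T}) : 'M[int]_#|A| :=
  \matrix_(i, j) (le (enum_val i) (enum_val j))%:R.

(* A permutation of 'I_n given by its (0-based) list of images. *)
Definition perm_fun n (s : seq nat) : 'I_n.+1 -> 'I_n.+1 :=
  fun i => inord (nth 0%N s i).

(* (12)(3456) in S_6, 0-based: 0<->1, 2->3->4->5->2 *)
Lemma pi6_inj : injective (@perm_fun 5 [:: 1; 0; 3; 4; 5; 2]%N).
Proof.
move=> [[|[|[|[|[|[|//]]]]]] ?] [[|[|[|[|[|[|//]]]]]] ?];
  move/(congr1 val); rewrite /perm_fun /= !inordK //; by move=> H; apply: val_inj.
Qed.
Definition pi6 : 'S_6 := perm pi6_inj.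

(* (12)(345)(6789) in S_9, 0-based: 0<->1, 2->3->4->2, 5->6->7->8->5 *)
Lemma sigma9_inj : injective (@perm_fun 8 [:: 1; 0; 3; 4; 2; 6; 7; 8; 5]%N).
Proof.
move=> [[|[|[|[|[|[|[|[|[|//]]]]]]]]] ?] [[|[|[|[|[|[|[|[|[|//]]]]]]]]] ?];
  move/(congr1 val); rewrite /perm_fun /= !inordK //; by move=> H; apply: val_inj.
Qed.
Definition sigma9 : 'S_9 := perm sigma9_inj.

From Stdlib Require Import NArith Lia.
From Stdlib Require DecimalNat DecimalPos.
From mathcomp Require Import all_boot all_order all_algebra all_fingroup.
Import GRing.Theory.
Set Implicit Arguments. Unset Strict Implicit. Unset Printing Implicit Defensive.

(* 1. For any finite poset, the sum of the entries of the cube of its incidence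
      matrix counts its 4-chains (incidence_cube_sum).
   2. Weight decomposition.  Split x in B^9 into its outer coordinates 1,2,6,7,8,9,
      on which sigma^9 acts as pi, and its middle block 3,4,5, on which sigma^4 is a
      3-cycle.  The powers of sigma bring every x to the normal form whose middle
      block is 1^k 0^(3-k), k the weight of the block.  Hence a sigma-invariant
      monotone f is the same as its four layers g_k(y) = f(y with middle 1^k 0^(3-k)),
      which form a 4-chain in Phi_6(pi) (phi9_chains4).
   3. Orbit labellings.  An f in Phi_n(p) is determined by its values on a system of
      representatives of the p-orbits of B^n, and these values form exactly the
      labellings respecting the order induced on orbits (sum_Phi).  For pi this
      gives the 324 elements of Phi_6(pi) as explicit bit lists.
   4. The 4-chains among these 324 lists are counted by dynamic programming in binary
      arithmetic (chain_table).
   Facts about the concrete permutations that range over all of B^6 or B^9 are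
   certified by evaluating boolean checks on the explicit list of all bit vectors. *)

(* Vectors of B^n are handled computationally as lists of booleans; bits_le is the
   componentwise order on such lists. *)
Definition bits_le (s t : seq bool) : bool := all2 implb s t.

Lemma bits_leP s t : size s = size t ->
  reflect (forall k, k < size s -> nth false s k -> nth false t k) (bits_le s t).
Proof.
move=> Hst; rewrite /bits_le all2E Hst eqxx /=.
apply: (iffP (all_nthP (false, false))); rewrite size_zip Hst minnn => H k Hk.
  by have := H k Hk; rewrite nth_zip // => /implyP.
by rewrite nth_zip //=; apply/implyP; apply: H.
Qed.

Definition permute (pl : seq nat) (s : seq bool) : seq bool := [seq nth false s k | k <- pl].

Fixpoint all_bits (m : nat) : seq (seq bool) :=
  if m is m'.+1 then [seq false :: s | s <- all_bits m'] ++ [seq true :: s | s <- all_bits m']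
  else [:: [::]].

Lemma mem_cons_map (b c : bool) s (l : seq (seq bool)) :
  (b :: s \in [seq c :: t | t <- l]) = (b == c) && (s \in l).
Proof.
by apply/mapP/andP => [[t Ht [-> ->]]|[/eqP -> Hs]]; [rewrite eqxx | exists s].
Qed.

Lemma mem_all_bits m s : (s \in all_bits m) = (size s == m).
Proof.
elim: m s => [|m IH] [|b s] //=; rewrite mem_cat ?mem_cons_map ?IH.
  by apply/negbTE/norP; split; apply/mapP => -[].
by case: b; rewrite /= ?orbF eqSS.
Qed.

Section Bits.
Variable n : nat.

Definition bits (x : vec n) : seq bool := map x (enum 'I_n).
Definition vec_of (s : seq bool) : vec n := [ffun i : 'I_n => nth false s i].

Lemma size_bits x : size (bits x) = n.
Proof. by rewrite size_map size_enum_ord. Qed.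

Lemma nth_bits x (i : 'I_n) : nth false (bits x) i = x i.
Proof. by rewrite (nth_map i) ?size_enum_ord // nth_ord_enum. Qed.

Lemma bitsK : cancel bits vec_of.
Proof. by move=> x; apply/ffunP => i; rewrite ffunE nth_bits. Qed.

Lemma vec_ofK s : size s = n -> bits (vec_of s) = s.
Proof.
move=> Hs; apply: (@eq_from_nth _ false); rewrite size_bits // => k Hk.
by rewrite (nth_bits _ (Ordinal Hk)) ffunE.
Qed.

Lemma bits_in_all x : bits x \in all_bits n.
Proof. by rewrite mem_all_bits size_bits. Qed.

Lemma all_bitsP (P : pred (seq bool)) : all P (all_bits n) -> forall x, P (bits x).
Proof. by move=> /allP H x; apply: H; apply: bits_in_all. Qed.

Lemma vle_bits x y : vle x y = bits_le (bits x) (bits y).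
Proof.
have Hs : size (bits x) = size (bits y) by rewrite !size_bits.
apply/forallP/(bits_leP Hs) => [H k|H i].
  by rewrite size_bits => Hk; rewrite (nth_bits x (Ordinal Hk)) (nth_bits y (Ordinal Hk)); exact/implyP/H.
by rewrite -!nth_bits; apply/implyP/H; rewrite size_bits.
Qed.

Definition vperm (p : 'S_n) (x : vec n) : vec n := [ffun i => x (p i)].

(* The list of images p(0), ..., p(n-1); it makes the action computable. *)
Definition perm_list (p : 'S_n) : seq nat := [seq val (p i) | i <- enum 'I_n].

Lemma size_perm_list p : size (perm_list p) = n.
Proof. by rewrite size_map; exact: size_enum_ord. Qed.

Lemma nth_perm_list p (i : 'I_n) : nth 0 (perm_list p) i = p i.
Proof.
have := size_perm_list p; rewrite size_map => Hs.
by rewrite (nth_map i) ?nth_ord_enum ?Hs.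
Qed.

Lemma bits_vperm p x : bits (vperm p x) = permute (perm_list p) (bits x).
Proof.
apply: (@eq_from_nth _ false); first by rewrite size_bits size_map size_perm_list.
move=> k; rewrite size_bits => Hk.
rewrite (nth_bits _ (Ordinal Hk)) ffunE (nth_map 0) ?size_perm_list //.
by rewrite (nth_perm_list p (Ordinal Hk)) nth_bits.
Qed.

Lemma bits_iter p j x : bits (iter j (vperm p) x) = iter j (permute (perm_list p)) (bits x).
Proof. by elim: j => //= j IH; rewrite bits_vperm IH. Qed.

Lemma Phi_vperm (p : 'S_n) f x : f \in Phi p -> f (vperm p x) = f x.
Proof. by rewrite inE => /andP[_ /eqP {2}<-]; rewrite ffunE. Qed.

Lemma Phi_iter (p : 'S_n) f j x : f \in Phi p -> f (iter j (vperm p) x) = f x.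
Proof. by move=> Hf; elim: j => //= j IH; rewrite Phi_vperm. Qed.

Lemma Phi_mono (p : 'S_n) f x y : f \in Phi p -> vle x y -> f x -> f y.
Proof. by rewrite !inE => /andP[/forallP/(_ x)/forallP/(_ y)/implyP H _] /H/implyP. Qed.

Lemma PhiP (p : 'S_n) (f : bfun n) : (forall x y, vle x y -> f x -> f y) ->
  (forall x, f (vperm p x) = f x) -> f \in Phi p.
Proof.
move=> Hmono Hinv; rewrite !inE; apply/andP; split.
  by apply/forallP => x; apply/forallP => y; apply/implyP => /Hmono /implyP.
by apply/eqP/ffunP => x; rewrite ffunE Hinv.
Qed.

Lemma vle_refl (x : vec n) : vle x x.
Proof. by apply/forallP => i; apply: implybb. Qed.

End Bits.

Lemma fleP n (f g : bfun n) x : fle f g -> f x -> g x.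
Proof. by move=> /forallP/(_ x)/implyP. Qed.

Lemma perm_list_perm_fun m (pl : seq nat) (pl_inj : injective (@perm_fun m pl)) :
  size pl = m.+1 -> all (fun k => k <= m) pl -> perm_list (perm pl_inj) = pl.
Proof.
move=> Hs /allP Hpl; apply: (@eq_from_nth _ 0); first by rewrite size_perm_list.
move=> k; rewrite size_perm_list => Hk.
rewrite (nth_perm_list _ (Ordinal Hk)) permE /perm_fun /=.
by rewrite inordK // ltnS Hpl // mem_nth ?Hs.
Qed.

Lemma perm_list_pi6 : perm_list pi6 = [:: 1; 0; 3; 4; 5; 2].
Proof. exact: perm_list_perm_fun. Qed.

Lemma perm_list_sigma9 : perm_list sigma9 = [:: 1; 0; 3; 4; 2; 6; 7; 8; 5].
Proof. exact: perm_list_perm_fun. Qed.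



Lemma card_bij (T U : finType) (A : {set T}) (B : {set U}) (f : T -> U) (g : U -> T) :
  {in A, forall x, f x \in B} -> {in B, forall y, g y \in A} ->
  {in A, cancel f g} -> {in B, cancel g f} -> #|A| = #|B|.
Proof.
move=> fB gA fK gK; have imA : f @: A = B.
  apply/setP => y; apply/imsetP/idP => [[x Hx ->]|Hy]; first exact: fB.
  by exists (g y); rewrite ?gK ?gA.
by rewrite -imA card_in_imset //; apply: can_in_inj fK.
Qed.

Section FourChains.
Variables (T : finType) (le : rel T) (A : {set T}).

Definition chains4 : nat :=
  \sum_(a in A) \sum_(b in A) \sum_(c in A) \sum_(d in A) (le a b * le b c * le c d).

Definition is_chain4 (t : (T * T) * (T * T)) : bool :=
  let: ((a, b), (c, d)) := t in
  [&& [&& a \in A, b \in A, c \in A & d \in A], le a b, le b c & le c d].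

Lemma chains4_card : chains4 = #|[set t | is_chain4 t]|.
Proof.
rewrite /chains4 -sum1_card.
under eq_bigr => a _ do under eq_bigr => b _ do rewrite pair_big /=.
rewrite pair_big /= pair_big /= big_mkcond [RHS]big_mkcond /=.
apply: eq_bigr => -[[a b] [c d]] _; rewrite inE /=.
by case: (a \in A) (b \in A) (c \in A) (d \in A) (le a b) (le b c) (le c d)
  => [] [] [] [] [] [] [].
Qed.

End FourChains.

Section IncidenceMatrix.
Local Open Scope ring_scope.

Lemma mx_cube_sum (R : pzSemiRingType) m (M : 'M[R]_m) :
  \sum_i \sum_j (M *m M *m M) i j = \sum_i \sum_k \sum_l \sum_j (M i k * M k l * M l j).
Proof.
apply: eq_bigr => i _.
under eq_bigr => j _ do rewrite mxE.
under eq_bigr => j _ do under eq_bigr => l _ do rewrite mxE big_distrl /=.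
rewrite exchange_big /=.
under eq_bigr => l _ do rewrite exchange_big /=.
by rewrite exchange_big.
Qed.

(* Step 1: for an incidence matrix each path contributes 1 exactly on a 4-chain. *)
Lemma incidence_cube_sum (T : finType) (le : rel T) (A : {set T}) : let Z := incidence_mx le A in
  \sum_i \sum_j (Z *m Z *m Z) i j = (chains4 le A)%:Z.
Proof.
move=> Z; rewrite mx_cube_sum /Z /incidence_mx.
under eq_bigr => i _ do under eq_bigr => k _ do under eq_bigr => l _ do
  under eq_bigr => j _ do rewrite !mxE -!natrM.
under eq_bigr => i _ do under eq_bigr => k _ do under eq_bigr => l _ do rewrite -natr_sum.
under eq_bigr => i _ do under eq_bigr => k _ do rewrite -natr_sum.
under eq_bigr => i _ do rewrite -natr_sum.
rewrite -natr_sum natz; congr Posz.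
rewrite /chains4 [RHS]big_enum_val /=.
under [RHS]eq_bigr => i _ do rewrite big_enum_val.
under [RHS]eq_bigr => i _ do under eq_bigr => k _ do rewrite big_enum_val.
by under [RHS]eq_bigr => i _ do under eq_bigr => k _ do under eq_bigr => l _ do
  rewrite big_enum_val.
Qed.

End IncidenceMatrix.

(* Labellings of the indices 0..m-1 by booleans that are monotone for a relation R,
   i.e. the up-closed subsets of a (pre)order on m points, and their enumeration. *)
Section Labellings.
Variable R : nat -> nat -> bool.

Definition respects (t : seq bool) : Prop :=
  forall k l, k < size t -> l < size t -> R k l -> nth false t k -> nth false t l.

(* The constraints involving the last index only: enough to extend a labelling. *)
Definition respects_last (t : seq bool) : bool :=
  let m := (size t).-1 in
  all (fun l => (R l m ==> nth false t l ==> nth false t m) &&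
                (R m l ==> nth false t m ==> nth false t l)) (iota 0 m).

Fixpoint labellings (m : nat) : seq (seq bool) :=
  if m is m'.+1 then
    [seq t <- [seq rcons t b | t <- labellings m', b <- [:: false; true]] | respects_last t]
  else [:: [::]].

Lemma respects_rcons t b : respects (rcons t b) <-> respects t /\ respects_last (rcons t b).
Proof.
have St : size (rcons t b) = (size t).+1 by rewrite size_rcons.
have Et l : l < size t -> nth false (rcons t b) l = nth false t l by move=> Hl; rewrite nth_rcons Hl.
rewrite /respects_last St /=; split=> [H|[H /allP Hlast] k l].
  split=> [k l Hk Hl|]; first by rewrite -!Et //; apply: H; rewrite St ltnS ltnW.
  apply/allP => l; rewrite mem_iota add0n /= => Hl; rewrite (Et l Hl).
  have Hl' : l < size (rcons t b) by rewrite St ltnS ltnW.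
  have Hs : size t < size (rcons t b) by rewrite St.
  by apply/andP; split; apply/implyP => Rl; apply/implyP; rewrite -(Et l Hl); apply: H.
have inI j : j < size t -> j \in iota 0 (size t) by rewrite mem_iota.
rewrite St !ltnS leq_eqVlt [l <= _]leq_eqVlt => /orP[/eqP->|Hk] /orP[/eqP->|Hl] Rkl //.
- by have /andP[_ /implyP/(_ Rkl)/implyP] := Hlast l (inI l Hl).
- by have /andP[/implyP/(_ Rkl)/implyP] := Hlast k (inI k Hk).
- by rewrite !Et //; apply: H.
Qed.

Lemma mem_labellings m t : t \in labellings m <-> size t = m /\ respects t.
Proof.
elim: m t => [|m IH] t.
  by case: t => [|b t]; split=> // -[].
have -> : labellings m.+1 =
  [seq t <- [seq rcons t b | t <- labellings m, b <- [:: false; true]] | respects_last t] by [].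
rewrite mem_filter; split=> [/andP[Hlast /allpairsP[[s b] /= [/IH[Ss Rs] _ Et]]]|[St Rt]].
  by subst t; rewrite size_rcons Ss; split=> //; apply/respects_rcons.
case/lastP: t St Rt => // s b; rewrite size_rcons => -[Ss] /respects_rcons[Rs ->]; rewrite andTb.
by apply/allpairsP; exists (s, b); split=> //; [apply/IH | case: b].
Qed.

Lemma labellings_uniq m : uniq (labellings m).
Proof.
elim: m => // m IH; apply: filter_uniq; apply: allpairs_uniq => //.
by move=> [s b] [s' b'] _ _ /= /rcons_inj [-> ->].
Qed.

End Labellings.

(* Step 3: a system of orbit representatives reps for a permutation with image list pl
   (orbits being traversed in at most ord steps) reduces Phi_n(p) to labellings of the
   representatives. *)
Section OrbitLabellings.
Variables (n ord : nat) (pl : seq nat) (reps : seq (seq bool)).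

Definition orbit_step : seq bool -> seq bool := permute pl.

Definition reaches (s t : seq bool) : bool :=
  has (fun j => iter j orbit_step s == t) (iota 0 ord).

Definition orbit_rep (k : nat) : seq bool := nth [::] reps k.

Definition orbit_index (s : seq bool) : nat := find (reaches s) reps.

(* The order induced on orbits: some point of orbit l lies above representative k. *)
Definition orbit_le (k l : nat) : bool :=
  has (fun j => bits_le (orbit_rep k) (iter j orbit_step (orbit_rep l))) (iota 0 ord).

Definition orbit_labellings : seq (seq bool) := labellings orbit_le (size reps).

Definition orbit_reps_ok : bool :=
  [&& all (fun r => size r == n) reps,
      all (fun k => orbit_index (orbit_rep k) == k) (iota 0 (size reps)) &
      all (fun s => [&& orbit_index s < size reps,
                        orbit_index (orbit_step s) == orbit_index s &
                        all (fun t => bits_le s t ==> orbit_le (orbit_index s) (orbit_index t))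
                            (all_bits n)])
          (all_bits n)].

Variable p : 'S_n.
Hypothesis plE : perm_list p = pl.
Hypothesis reps_ok : orbit_reps_ok.

Lemma bits_step_iter j (x : vec n) : bits (iter j (vperm p) x) = iter j orbit_step (bits x).
Proof. by rewrite bits_iter plE. Qed.

Lemma orbit_rep_index k : k < size reps ->
  orbit_index (orbit_rep k) = k /\ size (orbit_rep k) = n.
Proof.
case/and3P: reps_ok => /allP Hsize /allP Hidx _ Hk; split; apply/eqP.
  by apply: Hidx; rewrite mem_iota.
by apply: Hsize; rewrite mem_nth.
Qed.

Lemma orbit_index_facts : forall x : vec n,
  [&& orbit_index (bits x) < size reps,
      orbit_index (orbit_step (bits x)) == orbit_index (bits x) &
      all (fun t => bits_le (bits x) t ==> orbit_le (orbit_index (bits x)) (orbit_index t))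
          (all_bits n)].
Proof. by move=> x; case/and3P: reps_ok => _ _ /allP; apply; apply: bits_in_all. Qed.

Lemma orbit_index_lt (x : vec n) : orbit_index (bits x) < size reps.
Proof. by case/and3P: (orbit_index_facts x). Qed.

Lemma orbit_rep_reached (x : vec n) : exists j, iter j orbit_step (bits x) = orbit_rep (orbit_index (bits x)).
Proof.
have := orbit_index_lt x; rewrite -has_find => /(nth_find [::]) /hasP[j _ /eqP Ej].
by exists j.
Qed.

Lemma orbit_index_vperm (x : vec n) : orbit_index (bits (vperm p x)) = orbit_index (bits x).
Proof. by rewrite (bits_step_iter 1); case/and3P: (orbit_index_facts x) => _ /eqP. Qed.

Lemma orbit_index_mono (x y : vec n) : vle x y -> orbit_le (orbit_index (bits x)) (orbit_index (bits y)).
Proof.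
rewrite vle_bits => Hxy; case/and3P: (orbit_index_facts x) => _ _ /allP Hle.
by have /implyP := Hle _ (bits_in_all y); apply.
Qed.

Definition fun_of_labelling (t : seq bool) : bfun n :=
  [ffun x => nth false t (orbit_index (bits x))].

Definition labelling_of (f : bfun n) : seq bool := [seq f (vec_of n r) | r <- reps].

Lemma Phi_orbit_rep f (x : vec n) : f \in Phi p -> f x = f (vec_of n (orbit_rep (orbit_index (bits x)))).
Proof.
by move=> Hf; have [j <-] := orbit_rep_reached x; rewrite -bits_step_iter bitsK Phi_iter.
Qed.

Lemma labelling_ofK : {in Phi p, cancel labelling_of fun_of_labelling}.
Proof.
move=> f Hf; apply/ffunP => x.
by rewrite ffunE (nth_map [::]) ?orbit_index_lt // -Phi_orbit_rep.
Qed.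

Lemma labelling_of_in f : f \in Phi p -> labelling_of f \in orbit_labellings.
Proof.
move=> Hf; apply/mem_labellings; rewrite size_map; split=> // k l.
rewrite size_map => Hk Hl /hasP[j _ Hkl].
rewrite !(nth_map [::]) // => Hfk.
have [_ Sk] := orbit_rep_index Hk; have [_ Sl] := orbit_rep_index Hl.
rewrite -(Phi_iter j _ Hf); apply: (Phi_mono Hf _ Hfk).
by rewrite vle_bits bits_step_iter !vec_ofK.
Qed.

Lemma fun_of_labelling_in t : t \in orbit_labellings -> fun_of_labelling t \in Phi p.
Proof.
move=> /mem_labellings[St Rt]; apply: PhiP => [x y Hxy|x]; last by rewrite !ffunE orbit_index_vperm.
by rewrite !ffunE; apply: Rt (orbit_index_mono Hxy); rewrite St orbit_index_lt.
Qed.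

Lemma fun_of_labellingK : {in orbit_labellings, cancel fun_of_labelling labelling_of}.
Proof.
move=> t /mem_labellings[St _].
apply: (@eq_from_nth _ false); rewrite size_map ?St // => k Hk.
have [Ik Sk] := orbit_rep_index Hk.
by rewrite (nth_map [::]) // ffunE vec_ofK // Ik.
Qed.

Lemma sum_Phi (G : bfun n -> nat) :
  \sum_(f in Phi p) G f = \sum_(t <- orbit_labellings) G (fun_of_labelling t).
Proof.
rewrite -(big_map fun_of_labelling xpredT G) big_uniq; last first.
  by rewrite (map_inj_in_uniq (can_in_inj fun_of_labellingK)) labellings_uniq.
apply: eq_bigl => f; apply/idP/mapP => [Hf|[t Ht ->]]; last exact: fun_of_labelling_in.
by exists (labelling_of f); rewrite ?labelling_ofK ?labelling_of_in.
Qed.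

Lemma fle_labelling t t' : t \in orbit_labellings -> t' \in orbit_labellings ->
  fle (fun_of_labelling t) (fun_of_labelling t') = bits_le t t'.
Proof.
move=> /mem_labellings[St _] /mem_labellings[St' _].
apply/forallP/(bits_leP (etrans St (esym St'))) => [H k|H x].
  rewrite St => Hk; have := H (vec_of n (orbit_rep k)).
  by have [Ik Sk] := orbit_rep_index Hk; rewrite !ffunE vec_ofK // Ik => /implyP.
by rewrite !ffunE; apply/implyP/H; rewrite St orbit_index_lt.
Qed.

Lemma chains4_labellings : chains4 (@fle n) (Phi p) =
  \sum_(a <- orbit_labellings) \sum_(b <- orbit_labellings) \sum_(c <- orbit_labellings)
    \sum_(d <- orbit_labellings) (bits_le a b * bits_le b c * bits_le c d).
Proof.
rewrite /chains4 sum_Phi; apply: eq_big_seq => a Ha.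
rewrite sum_Phi; apply: eq_big_seq => b Hb.
rewrite sum_Phi; apply: eq_big_seq => c Hc.
rewrite sum_Phi; apply: eq_big_seq => d Hd.
by rewrite !fle_labelling.
Qed.

End OrbitLabellings.

Definition greedy_reps (n ord : nat) (pl : seq nat) : seq (seq bool) :=
  foldl (fun R s => if has (reaches ord pl s) R then R else rcons R s) [::] (all_bits n).

(* Step 4: counting chains in a list L for a relation r.  chains_from k a counts the
   chains a = a_0 r a_1 r ... r a_k; chain_table computes these numbers for all a in
   binary arithmetic, level by level, reusing the previous level. *)
Section ChainCounting.
Variables (T : Type) (r : T -> T -> bool) (L : seq T).

Fixpoint chains_from (k : nat) (a : T) : nat :=
  if k is k'.+1 then \sum_(b <- L) r a b * chains_from k' b else 1.

Lemma chains_from3 :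
  \sum_(a <- L) \sum_(b <- L) \sum_(c <- L) \sum_(d <- L) (r a b * r b c * r c d) =
  \sum_(a <- L) chains_from 3 a.
Proof.
apply: eq_bigr => a _ /=; apply: eq_bigr => b _.
rewrite big_distrr; apply: eq_bigr => c _ /=.
by rewrite mulnA big_distrr; apply: eq_bigr => d _; rewrite muln1.
Qed.

Definition sumN (s : seq N) : N := foldr N.add 0%num s.

Lemma N_of_sum (F : T -> nat) (s : seq T) :
  N.of_nat (\sum_(x <- s) F x) = sumN [seq N.of_nat (F x) | x <- s].
Proof. by elim: s => [|x s IH]; rewrite ?big_nil ?big_cons //= Nat2N.inj_add IH. Qed.

Fixpoint chain_table (k : nat) : seq N :=
  if k is k'.+1 then
    let w := chain_table k' in
    [seq sumN [seq (if r a bv.1 then bv.2 else 0%num) | bv <- zip L w] | a <- L]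
  else [seq 1%num | _ <- L].

Lemma chain_tableE k : chain_table k = [seq N.of_nat (chains_from k a) | a <- L].
Proof.
elim: k => [|k IH] /=; first exact: eq_map.
rewrite IH; apply: eq_map => a; rewrite N_of_sum -{1}(map_id L) zip_map -map_comp.
by congr sumN; apply: eq_map => b /=; case: (r a b); rewrite ?mul1n.
Qed.

End ChainCounting.

(* Phi_6(pi): 22 orbit representatives, 324 functions. *)
Definition reps6 := greedy_reps 6 4 [:: 1; 0; 3; 4; 5; 2].
Lemma pi6_reps_ok : orbit_reps_ok 6 4 [:: 1; 0; 3; 4; 5; 2] reps6.
Proof. by vm_compute. Qed.

Lemma chains4_Phi6 : N.of_nat (chains4 (@fle 6) (Phi pi6)) = 22062570%num.
Proof.
rewrite (chains4_labellings perm_list_pi6 pi6_reps_ok) chains_from3 N_of_sum -chain_tableE.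
by vm_compute.
Qed.

(* Step 2, for B^9 with middle block 2,3,4 (0-based): embed xs k inserts 1^k 0^(3-k)
   after the first two coordinates of xs; outer deletes the middle block and weight
   counts its ones. *)
Definition embed (xs : seq bool) (k : nat) : seq bool :=
  take 2 xs ++ nseq k true ++ nseq (3 - k) false ++ drop 2 xs.
Definition outer (zs : seq bool) : seq bool := take 2 zs ++ drop 5 zs.
Definition weight (zs : seq bool) : nat := count id (take 3 (drop 2 zs)).

Definition emb (x : vec 6) (k : nat) : vec 9 := vec_of 9 (embed (bits x) k).
Definition outv (z : vec 9) : vec 6 := vec_of 6 (outer (bits z)).
Definition wt (z : vec 9) : nat := weight (bits z).

Lemma bits_emb x k : k < 4 -> bits (emb x k) = embed (bits x) k.
Proof.
move=> Hk; rewrite vec_ofK // !size_cat size_take size_drop !size_nseq size_bits /=.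
by rewrite (addnA k) subnKC.
Qed.

Lemma bits_outv z : bits (outv z) = outer (bits z).
Proof. by rewrite vec_ofK // size_cat size_take size_drop size_bits. Qed.

Lemma in_iota4 k : k < 4 -> k \in iota 0 4.
Proof. by rewrite mem_iota. Qed.

Lemma emb_vperm x k : k < 4 -> iter 9 (vperm sigma9) (emb x k) = emb (vperm pi6 x) k.
Proof.
move=> Hk; apply: (can_inj (@bitsK 9)).
rewrite bits_iter perm_list_sigma9 !bits_emb // bits_vperm perm_list_pi6.
have check : all (fun xs => all (fun k =>
    iter 9 (permute [:: 1; 0; 3; 4; 2; 6; 7; 8; 5]) (embed xs k) ==
    embed (permute [:: 1; 0; 3; 4; 5; 2] xs) k) (iota 0 4)) (all_bits 6) by vm_compute.
by have /allP/(_ k (in_iota4 Hk))/eqP := all_bitsP check x.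
Qed.

Lemma emb_mono x x' k k' : vle x x' -> k <= k' -> k' < 4 -> vle (emb x k) (emb x' k').
Proof.
move=> Hx Hkk' Hk'; have Hk := leq_ltn_trans Hkk' Hk'.
rewrite vle_bits !bits_emb //; move: Hx; rewrite vle_bits.
have check : all (fun xs => all (fun xs' => all (fun k => all (fun k' =>
    bits_le xs xs' && (k <= k') ==> bits_le (embed xs k) (embed xs' k'))
    (iota 0 4)) (iota 0 4)) (all_bits 6)) (all_bits 6) by vm_compute.
have /allP/(_ _ (bits_in_all x'))/allP/(_ k (in_iota4 Hk))/allP/(_ k' (in_iota4 Hk')) :=
  all_bitsP check x.
by rewrite Hkk' andbT => /implyP.
Qed.

Lemma outv_wt_mono z z' : vle z z' -> vle (outv z) (outv z') && (wt z <= wt z').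
Proof.
rewrite !vle_bits !bits_outv.
have check : all (fun zs => all (fun zs' =>
    bits_le zs zs' ==> bits_le (outer zs) (outer zs') && (weight zs <= weight zs'))
    (all_bits 9)) (all_bits 9) by vm_compute.
by have /allP/(_ _ (bits_in_all z'))/implyP := all_bitsP check z.
Qed.

Lemma vperm_outv z :
  [/\ wt z < 4, wt (vperm sigma9 z) = wt z & outv (vperm sigma9 z) = vperm pi6 (outv z)].
Proof.
have check : all (fun zs => [&& weight zs < 4,
    weight (permute [:: 1; 0; 3; 4; 2; 6; 7; 8; 5] zs) == weight zs &
    outer (permute [:: 1; 0; 3; 4; 2; 6; 7; 8; 5] zs) ==
      permute [:: 1; 0; 3; 4; 5; 2] (outer zs)]) (all_bits 9) by vm_compute.
have /and3P[W /eqP E /eqP O] := all_bitsP check z.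
split=> //; first by rewrite /wt bits_vperm perm_list_sigma9.
apply: (can_inj (@bitsK 6)).
by rewrite bits_outv bits_vperm perm_list_sigma9 O bits_vperm perm_list_pi6 bits_outv.
Qed.

Lemma emb_normal_form z : exists j, iter j (vperm sigma9) z = emb (outv z) (wt z).
Proof.
have check : all (fun zs => has (fun j =>
    iter j (permute [:: 1; 0; 3; 4; 2; 6; 7; 8; 5]) zs == embed (outer zs) (weight zs))
    (iota 0 12)) (all_bits 9) by vm_compute.
have /hasP[j _ /eqP Ej] := all_bitsP check z.
exists j; apply: (can_inj (@bitsK 9)).
have [W _ _] := vperm_outv z.
by rewrite bits_iter perm_list_sigma9 Ej bits_emb // bits_outv.
Qed.

Lemma emb_retract x k : k < 4 -> wt (emb x k) = k /\ outv (emb x k) = x.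
Proof.
move=> Hk; rewrite /wt /outv bits_emb //.
have check : all (fun xs => all (fun k =>
    (weight (embed xs k) == k) && (outer (embed xs k) == xs)) (iota 0 4)) (all_bits 6)
  by vm_compute.
have /allP/(_ k (in_iota4 Hk))/andP[/eqP -> /eqP ->] := all_bitsP check x.
by rewrite bitsK.
Qed.

Definition quad := ((bfun 6 * bfun 6) * (bfun 6 * bfun 6))%type.

Definition layer (f : bfun 9) (k : nat) : bfun 6 := [ffun x => f (emb x k)].
Definition layers (f : bfun 9) : quad := ((layer f 0, layer f 1), (layer f 2, layer f 3)).

Definition pick (t : quad) (k : nat) : bfun 6 := nth t.1.1 [:: t.1.1; t.1.2; t.2.1; t.2.2] k.
Definition glue (t : quad) : bfun 9 := [ffun z => pick t (wt z) (outv z)].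

Local Notation is_chain := (is_chain4 (@fle 6) (Phi pi6)).

(* The layers of f lie in Phi_6(pi), since sigma^9 acts as pi on them, and increase with k. *)
Lemma layer_in f k : f \in Phi sigma9 -> k < 4 -> layer f k \in Phi pi6.
Proof.
move=> Hf Hk; apply: PhiP => [x y Hxy|x]; rewrite !ffunE; first exact/(Phi_mono Hf)/emb_mono.
by rewrite -emb_vperm // Phi_iter.
Qed.

Lemma layer_le f k : f \in Phi sigma9 -> k < 3 -> fle (layer f k) (layer f k.+1).
Proof.
move=> Hf Hk; apply/forallP => x; rewrite !ffunE; apply/implyP.
by apply: (Phi_mono Hf); apply: emb_mono (vle_refl x) (leqnSn k) Hk.
Qed.

Lemma layers_chain f : f \in Phi sigma9 -> is_chain (layers f).
Proof. by move=> Hf; rewrite /= !layer_in ?layer_le. Qed.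

Lemma pick_in t k : is_chain t -> k < 4 -> pick t k \in Phi pi6.
Proof.
by case: t => [[a b] [c d]] /and4P[/and4P[? ? ? ?] _ _ _]; case: k => [|[|[|[|]]]].
Qed.

Lemma pick_le t i j x : is_chain t -> i <= j -> j < 4 -> pick t i x -> pick t j x.
Proof.
case: t => [[a b] [c d]] /and4P[_ /fleP Hab /fleP Hbc /fleP Hcd].
case: i => [|[|[|[|i]]]]; case: j => [|[|[|[|j]]]] //= _ _; rewrite /pick /=; auto.
Qed.

Lemma glue_in t : is_chain t -> glue t \in Phi sigma9.
Proof.
move=> Ht; apply: PhiP => [z z' Hzz'|z]; rewrite !ffunE.
  have [Wz _ _] := vperm_outv z; have [Wz' _ _] := vperm_outv z'.
  have /andP[Ho Hw] := outv_wt_mono Hzz'.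
  by move=> H; apply: (pick_le Ht Hw Wz'); apply: (Phi_mono (pick_in Ht Wz) Ho H).
have [Wz -> ->] := vperm_outv z.
exact: Phi_vperm (pick_in Ht Wz).
Qed.

(* f is recovered from its layers through the normal form, and the layers of a glued
   chain are the chain itself. *)
Lemma layersK : {in Phi sigma9, cancel layers glue}.
Proof.
move=> f Hf; apply/ffunP => z; rewrite ffunE.
have [W _ _] := vperm_outv z; have [j Ej] := emb_normal_form z.
rewrite -[RHS](Phi_iter j _ Hf) Ej; move: W; rewrite /pick /=.
by case: (wt z) => [|[|[|[|]]]] //= _; rewrite ffunE.
Qed.

Lemma glueK : cancel glue layers.
Proof.
move=> t; have E k : k < 4 -> layer (glue t) k = pick t k.
  by move=> Hk; apply/ffunP => x; rewrite !ffunE; have [-> ->] := emb_retract x Hk.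
by case: t E => [[a b] [c d]] E; rewrite /layers !E.
Qed.

Lemma phi9_chains4 : phi sigma9 = chains4 (@fle 6) (Phi pi6).
Proof.
rewrite chains4_card; apply: (card_bij (f := layers) (g := glue)) => [f|t|f|t].
- by move=> Hf; rewrite inE layers_chain.
- by rewrite inE => /glue_in.
- exact: layersK.
- by move=> _; apply: glueK.
Qed.

(* Large nat literals are kept in decimal form; this converts them to binary. *)
Lemma N_of_nat_uint d :
  N.of_nat (Nat.of_num_uint (Number.UIntDecimal d)) = DecimalPos.Unsigned.of_lu (Decimal.rev d).
Proof.
rewrite /= DecimalNat.Unsigned.of_uint_alt.
by elim: (Decimal.rev d) => // l IH;
  cbn [DecimalNat.Unsigned.of_lu DecimalPos.Unsigned.of_lu]; lia.
Qed.

Local Open Scope ring_scope.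

Theorem mainTheorem5 :
  let Z := incidence_mx (@fle 6) (Phi pi6) in
  ((phi sigma9)%:Z = \sum_i \sum_j (Z *m Z *m Z) i j) /\
  (phi sigma9 = 22062570%N).
Proof.
move=> Z; rewrite phi9_chains4; split; first by rewrite incidence_cube_sum.
by apply: Nat2N.inj; rewrite chains4_Phi6 N_of_nat_uint.
Qed.
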